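(* Let $\Omega$ be a region of $\mathcal{C}^*_{n,A}$ and $\bm x\in\Omega$ with associated permutation $\pi$. (1) If $\bm y\in\Omega$ has associated permutation $\sigma$, then the partitions $p_\pi(\Omega)$ (computed from $\bm x$) and $p_\sigma(\Omega)$ (computed from $\bm y$) are equivalent. (2) Conversely, if $\sigma\in\mathfrak{S}_n$ admits a partition into consecutive subwords that is equivalent to $p_\pi(\Omega)$, then there exists $\bm y\in\Omega$ whose associated permutation is $\sigma$.
   Context: Let $A=\{a_1,\dots,a_m\}$ with $a_1>\dots>a_m>0$; $\mathcal{C}^*_{n,A}$ is the arrangement in $\mathbb{R}^n$ of hyperplanes $x_i-x_j=a_k$ ($i\ne j$, $1\le k\le m$), and regions are connected components of the complement. The associated permutation of $\bm x$ is the unique $\pi\in\mathfrak{S}_n$ with $x_{\pi(1)}\ge\dots\ge x_{\pi(n)}$ and $\pi^{-1}(i)<\pi^{-1}(j)$ whenever $i<j$ and $x_i=x_j$. Given $\bm x$ with associated permutation $\pi$, let $M_k$ ($1\le k\le m$) be the matrix $(\operatorname{sgn}(x_{\pi(s)}-x_{\pi(t)}-a_k))_{s,t\in[n]}$. Positions $s,t$ are equivalent if for every $k$ rows $s,t$ of $M_k$ have equally many $+$ entries and columns $s,t$ of $M_k$ have equally many $+$ entries; the classes are intervals of consecutive positions, and $p_\pi(\Omega)$ is the partition of the word $\pi(1)\cdots\pi(n)$ into the corresponding consecutive subwords (blocks). A partition of a permutation word into consecutive subwords $B_1|\cdots|B_s$ and a partition $C_1|\cdots|C_t$ of another permutation word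 are equivalent if $s=t$ and $C_j$ consists of exactly the same letters as $B_j$ for every $j$. *)

From HB Require Import structures.
From mathcomp Require Import all_boot all_order all_algebra all_fingroup.
From mathcomp Require Import all_classical all_reals all_analysis.
Set Implicit Arguments. Unset Strict Implicit. Unset Printing Implicit Defensive.
Import Order.TTheory GRing.Theory Num.Theory.
Import numFieldTopology.Exports numFieldNormedType.Exports.
Local Open Scope ring_scope.
Local Open Scope classical_set_scope.

Section Defs.
Variables (R : realType) (n : nat).

Definition arr_compl (A : seq R) : set 'rV[R]_n :=
  [set x | forall i j : 'I_n, i != j -> forall a, a \in A -> x ord0 i - x ord0 j != a].

Definition is_region (A : seq R) (Om : set 'rV[R]_n) : Prop :=
  exists2 x0, arr_compl A x0 & Om = connected_component (arr_compl A) x0.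

(* associated permutation: x_{pi(1)} >= ... >= x_{pi(n)}, ties ordered by index *)
Definition assoc_perm (x : 'rV[R]_n) (p : 'S_n) : Prop :=
  (forall s t : 'I_n, (s < t)%N -> x ord0 (p t) <= x ord0 (p s)) /\
  (forall i j : 'I_n, (i < j)%N -> x ord0 i = x ord0 j ->
     ((p^-1)%g i < (p^-1)%g j)%N).

Definition Mmat (x : 'rV[R]_n) (p : 'S_n) (a : R) : 'M[R]_n :=
  \matrix_(s, t) Num.sg (x ord0 (p s) - x ord0 (p t) - a).

Definition row_plus (M : 'M[R]_n) (s : 'I_n) : nat := #|[set t | M s t == 1]|.
Definition col_plus (M : 'M[R]_n) (t : 'I_n) : nat := #|[set s | M s t == 1]|.

Definition pos_equiv (A : seq R) (x : 'rV[R]_n) (p : 'S_n) (s t : 'I_n) : bool :=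
  all (fun a => (row_plus (Mmat x p a) s == row_plus (Mmat x p a) t) &&
                (col_plus (Mmat x p a) s == col_plus (Mmat x p a) t)) A.

(* a new block starts at position t iff t > 0 and t-1, t are not equivalent
   (the classes are intervals of consecutive positions) *)
Definition block_start (A : seq R) (x : 'rV[R]_n) (p : 'S_n) (t : 'I_n) : bool :=
  (0 < t)%N && ~~ [exists u : 'I_n, (u.+1 == t :> nat) && pos_equiv A x p u t].

(* index (from 0) of the block containing position s *)
Definition block_idx (A : seq R) (x : 'rV[R]_n) (p : 'S_n) (s : 'I_n) : nat :=
  #|[set t : 'I_n | block_start A x p t & (t <= s)%N]|.

Definition nblocks (A : seq R) (x : 'rV[R]_n) (p : 'S_n) : nat :=
  (\max_(s : 'I_n) (block_idx A x p s).+1)%N.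

Definition perm_word (p : 'S_n) : seq 'I_n := [seq p s | s <- enum 'I_n].

Definition region_part (A : seq R) (x : 'rV[R]_n) (p : 'S_n) : seq (seq 'I_n) :=
  [seq [seq p s | s <- enum 'I_n & block_idx A x p s == j]
  | j <- iota 0 (nblocks A x p)].

End Defs.

Definition is_consec_partition (n : nat) (w : seq 'I_n) (bs : seq (seq 'I_n)) : Prop :=
  flatten bs = w /\ all (fun b => b != [::]) bs.

Definition part_equiv (n : nat) (bs cs : seq (seq 'I_n)) : Prop :=
  size bs = size cs /\ forall j, (j < size bs)%N -> nth [::] bs j =i nth [::] cs j.

From Pilot Require Import Defs.
From HB Require Import structures.
From mathcomp Require Import all_boot all_order all_algebra all_fingroup.
From mathcomp Require Import all_classical all_reals all_analysis.
From mathcomp Require Import ring lra.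
Import Order.TTheory GRing.Theory Num.Theory.
Import numFieldTopology.Exports numFieldNormedType.Exports.
Set Implicit Arguments. Unset Strict Implicit.

(* Inside a region every gap [x_i - x_k - a] keeps its sign, so the sign
   matrices, read in terms of coordinates rather than positions, depend only on
   the region.  Counting the plus entries in the row and in the column of a
   coordinate orders the coordinates by a total preorder, and two permutations
   sorting the same total preorder have equivalent entries at every position
   (compare ranks); this gives (1).  For (2), blockwise equality of letters
   again says that [pi s] and [sigma s] are equivalent for every position [s].
   Equivalent coordinates have the same sign rows and columns, so the point
   [y] with [y_(sigma s) = x_(pi s) - eps * s] has the sign pattern of [x] for
   small [eps], is strictly sorted by [sigma], and the segment from [x] to [y]
   avoids the hyperplanes. *)

Local Open Scope ring_scope.

Section SortingPerm.
Variables (n : nat) (D : rel 'I_n).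

Definition sorting_perm (p : 'S_n) := forall s t : 'I_n, (s <= t)%N -> D (p s) (p t).

Lemma card_perm_lt (p : 'S_n) k : (k <= n)%N -> #|[set m | ((p^-1)%g m < k)%N]| = k.
Proof.
move=> le_kn.
have -> : [set m | ((p^-1)%g m < k)%N] = [set p (widen_ord le_kn j) | j in 'I_k].
  apply/setP => m; rewrite inE; apply/idP/imsetP => [lt_mk | [j _ ->]].
    exists (Ordinal lt_mk) => //.
    by rewrite (_ : widen_ord _ _ = (p^-1)%g m) ?permKV //; apply: val_inj.
  by rewrite permK /= ltn_ord.
rewrite card_imset ?card_ord // => j j' /perm_inj/(congr1 val) eq_jj'.
exact: val_inj.
Qed.

Lemma sorting_perm_rank p : sorting_perm p -> forall s,
  (#|[set m | D m (p s) && ~~ D (p s) m]| <= s < #|[set m | D m (p s)]|)%N.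
Proof.
move=> sorted_p s; apply/andP; split.
  rewrite -[X in (_ <= X)%N](card_perm_lt p (ltnW (ltn_ord s))).
  apply/subset_leq_card/fintype.subsetP => m; rewrite !inE => /andP[_ not_le].
  rewrite ltnNge; apply: contra not_le => /sorted_p.
  by rewrite permKV.
rewrite -[X in (X < _)%N]/(s.+1.-1) -(card_perm_lt p (ltn_ord s)).
apply/subset_leq_card/fintype.subsetP => m; rewrite !inE ltnS => /sorted_p.
by rewrite permKV.
Qed.

Hypotheses (D_total : total D) (D_trans : transitive D).

Lemma sorting_perm_equiv p q : sorting_perm p -> sorting_perm q ->
  forall s, D (p s) (q s) && D (q s) (p s).
Proof.
move=> sorted_p sorted_q s.
have below_sub i k : D i k -> ~~ D k i ->
    [set m | D m i] \subset [set m | D m k && ~~ D k m].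
  move=> le_ik not_le_ki; apply/fintype.subsetP => m; rewrite !inE => le_mi.
  rewrite (D_trans le_mi le_ik); apply: contra not_le_ki => le_km.
  exact: D_trans le_km le_mi.
wlog le_pq : p q sorted_p sorted_q / D (p s) (q s).
  move=> H; case/orP: (D_total (p s) (q s)) => [|le_qp]; first exact: H.
  by rewrite andbC; apply: H.
rewrite le_pq /=; apply: contraT => not_le_qp.
have /andP[_ lt_s] := sorting_perm_rank sorted_p s.
have /andP[le_s _] := sorting_perm_rank sorted_q s.
have := leq_trans (subset_leq_card (below_sub _ _ le_pq not_le_qp)) le_s.
by rewrite leqNgt lt_s.
Qed.

End SortingPerm.

(* [row_plus] and [col_plus] count classical sets: [classical_set_scope] is
   open in [Defs]. *)
Lemma in_set_bool (T : Type) (b : T -> bool) (x : T) :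
  (x \in [set y | b y]%classic) = b x.
Proof. by rewrite /in_mem /= /in_set asboolb. Qed.

Section Gaps.
Variables (R : realType) (n : nat).
Implicit Types (z : 'rV[R]_n) (p : 'S_n) (a : R) (i k : 'I_n).

Definition gap_pos z a i k : bool := 0 < z ord0 i - z ord0 k - a.
Definition rcount z a i := #|[set k | gap_pos z a i k]|.
Definition ccount z a k := #|[set i | gap_pos z a i k]|.

Lemma row_plus_Mmat z p a s : row_plus (Mmat z p a) s = rcount z a (p s).
Proof.
rewrite /rcount -(card_preimset _ (@perm_inj _ p)).
by apply: eq_card => t; rewrite in_set_bool !inE mxE sgr_cp0.
Qed.

Lemma col_plus_Mmat z p a t : col_plus (Mmat z p a) t = ccount z a (p t).
Proof.
rewrite /ccount -(card_preimset _ (@perm_inj _ p)).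
by apply: eq_card => s; rewrite in_set_bool !inE mxE sgr_cp0.
Qed.

Variable A : seq R.

Definition count_ge z i k :=
  all (fun a => (rcount z a k <= rcount z a i)%N && (ccount z a i <= ccount z a k)%N) A.
Definition count_eqv z i k := count_ge z i k && count_ge z k i.

Lemma pos_equivE z p s t : pos_equiv A z p s t = count_eqv z (p s) (p t).
Proof.
rewrite /pos_equiv /count_eqv /count_ge -all_predI; apply: eq_all => a /=.
rewrite !row_plus_Mmat !col_plus_Mmat !eqn_leq.
set rs := rcount z a (p s); set rt := rcount z a (p t).
set cs := ccount z a (p s); set ct := ccount z a (p t).
by case: (rs <= rt)%N; case: (rt <= rs)%N; case: (cs <= ct)%N; case: (ct <= cs)%N.
Qed.

Lemma count_ge_refl z : reflexive (count_ge z).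
Proof. by move=> i; apply/allP => a _; rewrite !leqnn. Qed.

Lemma count_ge_trans z : transitive (count_ge z).
Proof.
move=> j i k /allP ge_ij /allP ge_jk; apply/allP => a aA.
have /andP[r_ij c_ij] := ge_ij a aA; have /andP[r_jk c_jk] := ge_jk a aA.
by rewrite (leq_trans r_jk r_ij) (leq_trans c_ij c_jk).
Qed.

Lemma le_count_ge z i k : z ord0 k <= z ord0 i -> count_ge z i k.
Proof.
move=> le_ki; apply/allP => a _; apply/andP; split; apply/subset_leq_card;
  apply/fintype.subsetP => j; rewrite !inE /gap_pos => ?; lra.
Qed.

Lemma count_ge_total z : total (count_ge z).
Proof.
move=> i k; case: (lerP (z ord0 k) (z ord0 i)) => [/le_count_ge -> //|/ltW].
by move/le_count_ge ->; rewrite orbT.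
Qed.

Lemma count_eqv_refl z : reflexive (count_eqv z).
Proof. by move=> i; rewrite /count_eqv count_ge_refl. Qed.

Lemma count_eqv_sym z : symmetric (count_eqv z).
Proof. by move=> i k; rewrite /count_eqv andbC. Qed.

Lemma count_eqv_trans z : transitive (count_eqv z).
Proof.
move=> j i k /andP[ge_ij ge_ji] /andP[ge_jk ge_kj].
by rewrite /count_eqv (count_ge_trans ge_ij ge_jk) (count_ge_trans ge_kj ge_ji).
Qed.

Lemma count_eqv_congr z i i' k k' : count_eqv z i i' -> count_eqv z k k' ->
  count_eqv z i k = count_eqv z i' k'.
Proof.
move=> eqv_i eqv_k; apply/idP/idP => eqv_ik.
  rewrite count_eqv_sym in eqv_i.
  exact: count_eqv_trans eqv_i (count_eqv_trans eqv_ik eqv_k).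
rewrite count_eqv_sym in eqv_k.
exact: count_eqv_trans eqv_i (count_eqv_trans eqv_ik eqv_k).
Qed.

(* Equal counts force equal sign rows and columns, because the sets of
   positive entries in the rows of [i] and [i'] are nested. *)
Lemma count_eqv_gap_pos z a i i' : a \in A -> count_eqv z i i' ->
  gap_pos z a i =1 gap_pos z a i' /\ gap_pos z a ^~ i =1 gap_pos z a ^~ i'.
Proof.
move=> aA; wlog le_i'i : i i' / z ord0 i' <= z ord0 i.
  move=> H eqv_ii'; case: (lerP (z ord0 i') (z ord0 i)) => [le|/ltW le].
    exact: H.
  rewrite count_eqv_sym in eqv_ii'; have [eq_row eq_col] := H i' i le eqv_ii'.
  by split=> k; [rewrite eq_row | rewrite eq_col].
case/andP=> /allP/(_ a aA)/andP[r1 c1] /allP/(_ a aA)/andP[r2 c2].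
have row_sub : [set k | gap_pos z a i' k] \subset [set k | gap_pos z a i k].
  by apply/fintype.subsetP => k; rewrite !inE /gap_pos => ?; lra.
have col_sub : [set k | gap_pos z a k i] \subset [set k | gap_pos z a k i'].
  by apply/fintype.subsetP => k; rewrite !inE /gap_pos => ?; lra.
have /subset_cardP/(_ row_sub) eq_row : rcount z a i' = rcount z a i.
  by apply/eqP; rewrite eqn_leq r1 r2.
have /subset_cardP/(_ col_sub) eq_col : ccount z a i = ccount z a i'.
  by apply/eqP; rewrite eqn_leq c1 c2.
by split=> k; [move: (eq_row k) | move: (eq_col k)]; rewrite !inE.
Qed.

Lemma count_eqv_gap_pos2 z a i i' k k' : a \in A ->
  count_eqv z i i' -> count_eqv z k k' -> gap_pos z a i k = gap_pos z a i' k'.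
Proof.
by move=> aA /(count_eqv_gap_pos aA)[-> _] /(count_eqv_gap_pos aA)[_ ->].
Qed.

End Gaps.

Lemma flatten_filter_iota (T : eqType) (f : T -> nat) m k (l : seq T) :
  sorted (fun a b => (f a <= f b)%N) l -> all (fun a => (m <= f a < m + k)%N) l ->
  flatten [seq [seq a <- l | f a == j] | j <- iota m k] = l.
Proof.
have f_trans : transitive (fun a b => (f a <= f b)%N).
  by move=> b a c; apply: leq_trans.
have split_min m' l' : sorted (fun a b => (f a <= f b)%N) l' ->
    all (fun a => (m' <= f a)%N) l' ->
    [seq a <- l' | f a == m'] ++ [seq a <- l' | f a != m'] = l'.
  elim: l' => //= a l' IH sorted_al /andP[ge_a ge_l].
  case: eqP => [_ | /eqP ne_am] /=; first by rewrite IH ?(path_sorted sorted_al).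
  have gt_l b : b \in l' -> (m' < f b)%N.
    move=> bl; rewrite (leq_trans _ (allP (order_path_min f_trans sorted_al) b bl)) //.
    by rewrite ltn_neqAle eq_sym ne_am ge_a.
  rewrite (eq_in_filter (a2 := pred0)) => [|b /gt_l lt_b]; last by rewrite gtn_eqF.
  rewrite filter_pred0 (eq_in_filter (a2 := predT)) => [|b /gt_l lt_b].
    by rewrite filter_predT.
  by rewrite gtn_eqF.
elim: k m l => [|k IH] m l sorted_l bounds_l /=.
  by case: l bounds_l {sorted_l} => //= a l; rewrite addn0 ltnNge andbN.
have ge_l : all (fun a => (m <= f a)%N) l.
  by apply: sub_all bounds_l => a /andP[].
rewrite -{3}(split_min m l) //; congr (_ ++ _).
rewrite -[RHS](IH m.+1) ?(sorted_filter f_trans) //; last first.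
  apply/allP => a; rewrite mem_filter => /andP[ne_am al].
  have /andP[ge_a lt_a] := allP bounds_l a al.
  by rewrite addSnnS lt_a ltn_neqAle eq_sym ne_am ge_a.
congr flatten; apply/eq_in_map => j; rewrite mem_iota => /andP[lt_mj _].
rewrite -filter_predI; apply: eq_filter => a /=.
by case: eqP => // ->; rewrite gtn_eqF.
Qed.

Lemma nth_flatten_same_block (T : eqType) (x0 : T) (bs cs : seq (seq T)) s :
  size bs = size cs -> (forall j, (j < size bs)%N -> nth [::] bs j =i nth [::] cs j) ->
  uniq (flatten bs) -> uniq (flatten cs) -> (s < size (flatten bs))%N ->
  exists2 j, nth x0 (flatten bs) s \in nth [::] bs j
           & nth x0 (flatten cs) s \in nth [::] bs j.
Proof.
elim: bs cs s => [|b bs IH] [|c cs] s //= [size_eq] nth_eq.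
rewrite !cat_uniq => /and3P[uniq_b _ uniq_bs] /and3P[uniq_c _ uniq_cs] lt_s.
have eq_bc : b =i c by apply: (nth_eq 0%N).
have size_bc : size b = size c by apply/perm_size/uniq_perm.
rewrite !nth_cat -size_bc; case: ifP => lt_sb.
  by exists 0%N; [exact: mem_nth | rewrite /= eq_bc mem_nth // -size_bc].
have [|j] := IH cs (s - size b)%N size_eq (fun j => nth_eq j.+1) uniq_bs uniq_cs.
  by rewrite size_cat in lt_s; rewrite ltn_subLR // leqNgt lt_sb.
by exists j.+1.
Qed.

Lemma nth_perm_word n (p : 'S_n) x0 (s : 'I_n) : nth x0 (perm_word p) s = p s.
Proof. by rewrite (nth_map s) ?size_enum_ord // nth_ord_enum. Qed.

Section Blocks.
Variables (R : realType) (n : nat) (A : seq R).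
Implicit Types (z x y : 'rV[R]_n) (p pi sigma : 'S_n).

Definition descending z p := forall s t : 'I_n, (s < t)%N -> z ord0 (p t) <= z ord0 (p s).

Lemma descending_sorting z p : descending z p -> sorting_perm (count_ge A z) p.
Proof.
move=> desc s t; rewrite leq_eqVlt => /orP[/eqP/val_inj -> | /desc].
  exact: count_ge_refl.
exact: le_count_ge.
Qed.

Lemma block_startE z p t : block_start A z p t =
  (0 < t)%N && ~~ [exists u : 'I_n, (u.+1 == t :> nat) && count_eqv A z (p u) (p t)].
Proof. by congr (_ && ~~ _); apply: eq_existsb => u; rewrite pos_equivE. Qed.

Lemma block_start_sep z p (u t v : 'I_n) : descending z p ->
  (u < t)%N -> (t <= v)%N -> block_start A z p t -> ~~ count_eqv A z (p u) (p v).
Proof.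
move=> /descending_sorting sorted_p lt_ut le_tv.
rewrite block_startE => /andP[gt0_t /existsPn no_eqv].
have lt_t'n : (t.-1 < n)%N by rewrite (leq_ltn_trans (leq_pred t)).
apply: contra (no_eqv (Ordinal lt_t'n)) => /andP[_ ge_vu].
rewrite /= prednK // eqxx /count_eqv sorted_p ?leq_pred //=.
apply: count_ge_trans (sorted_p _ _ le_tv) _; apply: count_ge_trans ge_vu _.
by apply: sorted_p; rewrite /= -ltnS prednK.
Qed.

Lemma no_block_start_eqv z p (s s' : 'I_n) : (s <= s')%N ->
  (forall t : 'I_n, (s < t)%N -> (t <= s')%N -> ~~ block_start A z p t) ->
  count_eqv A z (p s) (p s').
Proof.
case: s' => m; elim: m => [|m IH] lt_mn /= le_sm no_start.
  have -> : Ordinal lt_mn = s by apply: val_inj; apply/eqP; rewrite eqn_leq le_sm.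
  exact: count_eqv_refl.
case: (ltnP s m.+1) => [lt_sm | ge_sm]; last first.
  have -> : Ordinal lt_mn = s by apply: val_inj; apply/eqP; rewrite eqn_leq le_sm ge_sm.
  exact: count_eqv_refl.
have lt_m : (m < n)%N := ltnW lt_mn.
apply: count_eqv_trans (IH lt_m lt_sm (fun t lt_st le_tm => no_start t lt_st (leqW le_tm))) _.
move: (no_start (Ordinal lt_mn) lt_sm (leqnn _)).
rewrite block_startE negb_and negbK /= => /existsP[u /andP[eq_um]].
by have -> : Ordinal lt_m = u by apply: val_inj; apply/eqP; rewrite -eqSS eq_sym.
Qed.

Lemma block_idx_eqE z p : descending z p -> forall s s',
  (block_idx A z p s == block_idx A z p s') = count_eqv A z (p s) (p s').
Proof.
move=> desc s s'; wlog le_ss' : s s' / (s <= s')%N.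
  move=> H; case: (leqP s s') => [|/ltnW]; first exact: H.
  by move=> /H; rewrite eq_sym count_eqv_sym.
have sub : [set t | block_start A z p t & (t <= s)%N]
           \subset [set t | block_start A z p t & (t <= s')%N].
  by apply/fintype.subsetP => t; rewrite !inE => /andP[-> /leq_trans->].
rewrite /block_idx (subset_leqif_cards sub).2 finset.eqEsubset sub /=.
apply/fintype.subsetP/idP => [sub' | eqv_ss' t].
  apply: no_block_start_eqv => // t lt_st le_ts'; apply/negP => start_t.
  by have := sub' t; rewrite !inE start_t le_ts' leqNgt lt_st => /(_ isT).
rewrite !inE => /andP[start_t le_ts']; rewrite start_t leqNgt.
by apply: contraL eqv_ss' => lt_st; apply: block_start_sep start_t.
Qed.

Lemma block_idx_mono z p : {homo block_idx A z p : s t / (s <= t)%N}.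
Proof.
move=> s t le_st; apply/subset_leq_card/fintype.subsetP => u.
by rewrite !inE => /andP[-> /leq_trans->].
Qed.

Lemma block_idx_lt_nblocks z p s : (block_idx A z p s < nblocks A z p)%N.
Proof. exact: (@leq_bigmax _ (fun s => (block_idx A z p s).+1) s). Qed.

Lemma size_region_part z p : size (region_part A z p) = nblocks A z p.
Proof. by rewrite size_map size_iota. Qed.

Lemma mem_region_part z p j i :
  (i \in nth [::] (region_part A z p) j) = (block_idx A z p ((p^-1)%g i) == j).
Proof.
case: (ltnP j (nblocks A z p)) => [lt_j | ge_j].
  rewrite /region_part (nth_map 0%N) ?size_iota // nth_iota // add0n.
  apply/mapP/idP => [[s] | idx_i].
    by rewrite mem_filter mem_enum andbT => /eqP <- ->; rewrite permK.
  by exists ((p^-1)%g i); rewrite ?permKV // mem_filter mem_enum idx_i.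
rewrite nth_default ?size_region_part // in_nil; apply/esym/negbTE.
by rewrite neq_ltn (leq_trans (block_idx_lt_nblocks z p _) ge_j).
Qed.

Lemma flatten_region_part z p : flatten (region_part A z p) = perm_word p.
Proof.
rewrite /region_part /perm_word.
rewrite -[in RHS](@flatten_filter_iota _ (block_idx A z p) 0 (nblocks A z p) (enum 'I_n)).
- by rewrite map_flatten -map_comp.
- have := iota_sorted 0 n; rewrite -val_enum_ord sorted_map.
  by apply: sub_sorted => s t; apply: block_idx_mono.
- by apply/allP => s _; rewrite leq0n add0n block_idx_lt_nblocks.
Qed.

Lemma region_part_equiv x y pi sigma : descending x pi -> descending y sigma ->
  count_ge A y =2 count_ge A x ->
  part_equiv (region_part A x pi) (region_part A y sigma).
Proof.
move=> desc_x desc_y ge_yx.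
have sorted_sigma : sorting_perm (count_ge A x) sigma.
  by move=> s t le_st; rewrite -ge_yx; apply: descending_sorting.
have pi_sigma s : count_eqv A x (pi s) (sigma s).
  exact: (sorting_perm_equiv (count_ge_total A x) (@count_ge_trans _ _ A x)
           (descending_sorting desc_x) sorted_sigma s).
have eqv_yx i k : count_eqv A y i k = count_eqv A x i k by rewrite /count_eqv !ge_yx.
have idx_eq s : block_idx A y sigma s = block_idx A x pi s.
  apply: eq_card => t; rewrite !inE !block_startE; congr (_ && ~~ _ && _).
  by apply: eq_existsb => u; rewrite eqv_yx (count_eqv_congr (pi_sigma u) (pi_sigma t)).
have nblocks_eq : nblocks A y sigma = nblocks A x pi.
  by apply: eq_bigr => s _; rewrite idx_eq.
have idx_pi_sigma i : block_idx A x pi ((pi^-1)%g i) = block_idx A x pi ((sigma^-1)%g i).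
  apply/eqP; rewrite block_idx_eqE // permKV count_eqv_sym.
  by have := pi_sigma ((sigma^-1)%g i); rewrite permKV.
split=> [|j _ i].
  by rewrite (size_region_part x pi) (size_region_part y sigma) nblocks_eq.
by rewrite (mem_region_part x pi) (mem_region_part y sigma) idx_eq idx_pi_sigma.
Qed.

Lemma part_equiv_count_eqv x pi sigma cs : descending x pi ->
  is_consec_partition (perm_word sigma) cs -> part_equiv (region_part A x pi) cs ->
  forall s, count_eqv A x (pi s) (sigma s).
Proof.
move=> desc [flat_cs _] [size_eq nth_eq] s.
have uniq_word (q : 'S_n) : uniq (perm_word q).
  by rewrite map_inj_uniq ?enum_uniq //; apply: perm_inj.
have lt_s : (s < size (flatten (region_part A x pi)))%N.
  by rewrite flatten_region_part size_map size_enum_ord.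
have [j] := nth_flatten_same_block s size_eq nth_eq
  (etrans (congr1 uniq (flatten_region_part x pi)) (uniq_word pi))
  (etrans (congr1 uniq flat_cs) (uniq_word sigma)) lt_s.
rewrite flatten_region_part flat_cs !nth_perm_word !mem_region_part permK.
by move=> /eqP <-; rewrite eq_sym block_idx_eqE // permKV.
Qed.

End Blocks.

Local Open Scope classical_set_scope.

Section RealFacts.
Variable R : realType.

Lemma connected_pos_stable (T : topologicalType) (S : set T) (f : T -> R) :
  connected S -> continuous f -> (forall w, S w -> f w != 0) ->
  forall u v, S u -> S v -> (0 < f u) = (0 < f v).
Proof.
move=> connS cont_f nz_f.
have /connected_intervalP itv : connected (f @` S).
  by apply: connected_continuous_connected connS _; apply/continuous_subspaceT.
have pos_pos u v : S u -> S v -> 0 < f u -> 0 < f v.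
  move=> Su Sv fu_gt0; rewrite ltNge; apply/negP => fv_le0.
  have [w Sw fw0] : (f @` S) 0.
    by apply: (itv (f v) (f u)); [exists v | exists u | rewrite fv_le0 ltW].
  by move: (nz_f w Sw); rewrite fw0 eqxx.
by move=> u v Su Sv; apply/idP/idP; apply: pos_pos.
Qed.

Lemma convex_comb_neq0 (d e l : R) : 0 <= l <= 1 ->
  d != 0 -> e != 0 -> (0 < d) = (0 < e) -> (1 - l) * d + l * e != 0.
Proof.
move=> /andP[l_ge0 l_le1] d_neq0 e_neq0 de; case: (ltrgtP 0 d) => [d_gt0 | d_lt0 | d_eq0].
- have e_gt0 : 0 < e by rewrite -de.
  by apply/lt0r_neq0; nra.
- have e_lt0 : e < 0 by rewrite lt_neqAle e_neq0 leNgt -de -leNgt ltW.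
  by apply/ltr0_neq0; nra.
- by move: d_neq0; rewrite -d_eq0 eqxx.
Qed.

Lemma small_perturb_sign (d q e : R) : `|q| < e -> e <= `|d| ->
  (0 < d + q) = (0 < d) /\ d + q != 0.
Proof.
rewrite ltr_norml ler_normr => /andP[q_gt q_lt] /orP[d_ge | d_le].
  by split; [apply/idP/idP => _ | apply/lt0r_neq0]; lra.
by split; [apply/idP/idP => ? | apply/ltr0_neq0]; lra.
Qed.

Lemma fin_pos_lower_bound (T : finType) (f : T -> R) :
  (forall t, 0 < f t) -> exists2 e, 0 < e & forall t, e <= f t.
Proof.
move=> f_gt0; have [t0 _ | T0] := pickP (@predT T); last first.
  by exists 1 => // t; have := T0 t.
have [t _ min_t] := @arg_minP _ _ T t0 predT f isT.
by exists (f t) => // t'; apply: min_t.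
Qed.

End RealFacts.

Section Regions.
Variables (R : realType) (n : nat) (A : seq R).
Implicit Types (x y : 'rV[R]_n) (pi sigma : 'S_n).

Definition same_side x y := forall a i k, a \in A -> gap_pos x a i k = gap_pos y a i k.

Lemma same_side_count_ge x y : same_side x y -> count_ge A y =2 count_ge A x.
Proof.
move=> xy i k; apply: eq_in_all => a aA /=.
have r j : rcount y a j = rcount x a j by apply: eq_card => l; rewrite !inE xy.
have c j : ccount y a j = ccount x a j by apply: eq_card => l; rewrite !inE xy.
by rewrite !r !c.
Qed.

Lemma component_same_side x0 x y : connected_component (arr_compl A) x0 x ->
  connected_component (arr_compl A) x0 y -> same_side x y.
Proof.
move=> cc_x cc_y a i k aA; case: (eqVneq i k) => [-> | neq_ik].
  by rewrite /gap_pos !subrr.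
apply: (connected_pos_stable (S := connected_component (arr_compl A) x0)
          (f := fun z : 'rV[R]_n => z ord0 i - z ord0 k - a)) => //.
- exact: component_connected.
- move=> z; apply: (@continuousB _ _ _ (fun z : 'rV[R]_n => z ord0 i - z ord0 k) (fun=> a)).
    apply: (@continuousB _ _ _ (fun z : 'rV[R]_n => z ord0 i) (fun z => z ord0 k));
    exact: coord_continuous.
  exact: cst_continuous.
- by move=> w /connected_component_sub compl_w; rewrite subr_eq0; apply: compl_w.
Qed.

Lemma same_side_component x0 x y : connected_component (arr_compl A) x0 x ->
  arr_compl A y -> same_side x y -> connected_component (arr_compl A) x0 y.
Proof.
move=> cc_x compl_y xy.
have compl_x := connected_component_sub cc_x.
pose g (l : R) := x + l *: (y - x).
have cont_g : continuous g.
  move=> l; apply: (@continuousD _ _ _ (fun=> x) (fun l : R => l *: (y - x))).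
    exact: cst_continuous.
  by apply: (@continuousZr_tmp _ _ _ (fun l : R => l)); apply: cvg_id.
have conn_seg : connected (g @` `[0, 1]).
  apply: connected_continuous_connected; first exact: segment_connected.
  exact: continuous_subspaceT.
have seg_x : (g @` `[0, 1]) x.
  by exists 0; [rewrite /= in_itv /= lexx ler01 | rewrite /g scale0r addr0].
have seg_y : (g @` `[0, 1]) y.
  by exists 1; [rewrite /= in_itv /= lexx ler01 | rewrite /g scale1r addrC subrK].
have seg_compl : g @` `[0, 1] `<=` arr_compl A.
  move=> z [l]; rewrite /= in_itv /= => l01 <- i j neq_ij a aA.
  rewrite !mxE -subr_eq0.
  have -> : x ord0 i + l * (y ord0 i - x ord0 i) - (x ord0 j + l * (y ord0 j - x ord0 j)) - a
      = (1 - l) * (x ord0 i - x ord0 j - a) + l * (y ord0 i - y ord0 j - a) by ring.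
  apply: convex_comb_neq0; rewrite ?subr_eq0 ?compl_x ?compl_y //.
  exact: xy.
apply: connected_component_trans cc_x _.
exact: connected_component_max seg_x seg_compl conn_seg _ seg_y.
Qed.

Lemma gap_lower_bound x : all (fun a => 0 < a) A -> arr_compl A x ->
  exists2 e, 0 < e & forall a i k, a \in A -> e <= `|x ord0 i - x ord0 k - a|.
Proof.
move=> A_gt0 compl_x.
have gaps_gt0 (t : 'I_n * 'I_n * 'I_(size A)) :
    0 < `|x ord0 t.1.1 - x ord0 t.1.2 - nth 0 A t.2|.
  case: t => [[i k] j] /=; rewrite normr_gt0.
  case: (eqVneq i k) => [-> | neq_ik]; last by rewrite subr_eq0 compl_x ?mem_nth.
  by rewrite subrr sub0r oppr_eq0 lt0r_neq0 // (allP A_gt0) ?mem_nth.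
have [e e_gt0 le_e] := fin_pos_lower_bound gaps_gt0.
exists e => // a i k aA; have idx_a : (index a A < size A)%N by rewrite index_mem.
by have := le_e (i, k, Ordinal idx_a); rewrite /= nth_index.
Qed.

Lemma assoc_perm_strict y sigma :
  (forall s t : 'I_n, (s < t)%N -> y ord0 (sigma t) < y ord0 (sigma s)) ->
  assoc_perm y sigma.
Proof.
move=> strict; split=> [s t /strict /ltW // | i j lt_ij eq_ij].
case: ltngtP => // [/strict | /val_inj/perm_inj eq_ij'].
  by rewrite !permKV eq_ij ltxx.
by move: lt_ij; rewrite eq_ij' ltnn.
Qed.

Lemma exists_same_side_assoc_perm x pi sigma : all (fun a => 0 < a) A ->
  arr_compl A x -> descending x pi -> (forall s, count_eqv A x (pi s) (sigma s)) ->
  exists2 y, arr_compl A y /\ same_side x y & assoc_perm y sigma.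
Proof.
move=> A_gt0 compl_x desc pi_sigma.
have [e e_gt0 large] := gap_lower_bound A_gt0 compl_x.
pose rk i := (sigma^-1)%g i.
pose u i := pi (rk i).
pose eps := e / (n%:R + 1).
(* The perturbation [eps * rk] breaks the ties along [sigma] and stays below
   every gap of [x], so it changes no sign. *)
pose y := \row_i (x ord0 (u i) - eps * (rk i)%:R).
have eps_gt0 : 0 < eps by rewrite divr_gt0 // ltr_wpDl.
have gap_y a i k : y ord0 i - y ord0 k - a
    = (x ord0 (u i) - x ord0 (u k) - a) + eps * ((rk k)%:R - (rk i)%:R).
  by rewrite !mxE; ring.
have small i k : `|eps * ((rk k)%:R - (rk i)%:R)| < e.
  have rk_le j : (rk j)%:R <= n%:R :> R by rewrite ler_nat ltnW.
  have := rk_le i; have := rk_le k; have := ler0n R (rk i); have := ler0n R (rk k).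
  have -> : e = eps * (n%:R + 1) by rewrite divfK // lt0r_neq0 // ltr_wpDl.
  rewrite normrM gtr0_norm // ltr_pM2l // ltr_norml => *; apply/andP; split; lra.
have gap_u a i k : a \in A -> gap_pos x a (u i) (u k) = gap_pos x a i k.
  move=> aA; rewrite (count_eqv_gap_pos2 aA (pi_sigma (rk i)) (pi_sigma (rk k))).
  by rewrite /rk !permKV.
exists y; first split.
- move=> i k _ a aA; rewrite -subr_eq0 gap_y.
  exact: (small_perturb_sign (small i k) (large a (u i) (u k) aA)).2.
- move=> a i k aA; rewrite -gap_u // /gap_pos gap_y.
  by rewrite (small_perturb_sign (small i k) (large a (u i) (u k) aA)).1.
apply: assoc_perm_strict => s t lt_st; rewrite !mxE /u /rk !permK.
have : eps * s%:R < eps * t%:R by rewrite ltr_pM2l // ltr_nat.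
by have := desc s t lt_st; lra.
Qed.

End Regions.

Unset Implicit Arguments.

Theorem lemma2p5 (R : realType) (n : nat) (A : seq R)
  (hA : sorted (fun a b : R => b < a) A) (hApos : all (fun a : R => 0 < a) A)
  (Om : set 'rV[R]_n) (hOm : is_region A Om)
  (x : 'rV[R]_n) (hx : Om x) (pi : 'S_n) (hpi : assoc_perm x pi) :
  (forall (y : 'rV[R]_n) (sigma : 'S_n), Om y -> assoc_perm y sigma ->
     part_equiv (region_part A x pi) (region_part A y sigma)) /\
  (forall (sigma : 'S_n) (cs : seq (seq 'I_n)),
     is_consec_partition (perm_word sigma) cs ->
     part_equiv (region_part A x pi) cs ->
     exists2 y, Om y & assoc_perm y sigma).
Proof.
case: hOm => x0 _ Om_eq; subst Om.
have desc_x : descending x pi := hpi.1.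
split=> [y sigma hy [desc_y _] | sigma cs cs_part cs_equiv].
  exact/region_part_equiv/same_side_count_ge/(component_same_side hx hy).
have [y [compl_y xy] assoc_y] := exists_same_side_assoc_perm hApos
  (connected_component_sub hx) desc_x (part_equiv_count_eqv desc_x cs_part cs_equiv).
by exists y => //; apply: same_side_component hx compl_y xy.
Qed.
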